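(* Let $(d,e;m)\in\mathcal{E}$ with $d\geq e$ be obstructive, i.e. there exists a rational $a\geq1$ with $\mu(d,e;m)(a)>\sqrt{a/2}$. Then either $e=d$ or $e=d-1$.
   Context: Weight expansion: for rational $a=p/q\geq1$ in lowest terms with continued fraction $[l_0;l_1,\dots,l_N]$ ($l_N\geq2$ if $N\geq1$), $w(a)=(1^{\times l_0},x_1^{\times l_1},\dots,x_N^{\times l_N})$ with $x_0=1$, $x_1=a-l_0$, $x_i=x_{i-2}-l_{i-1}x_{i-1}$; here $x^{\times l}$ is $x$ repeated $l$ times. One has $\sum w_i^2=a$. The set $\mathcal{E}$: a Cremona transform of an integer tuple $(\delta;n_1,\dots,n_k)$ with $n_1\geq\dots\geq n_k$ is $(2\delta-n_1-n_2-n_3;\delta-n_2-n_3,\delta-n_1-n_3,\delta-n_1-n_2,n_4,\dots,n_k)$; a Cremona move is a Cremona transform followed by a permutation of the entries after the semicolon. $\mathcal{E}$ consists of $(0,0;-1)$ together with all integer tuples $(d,e;m_1,\dots,m_M)$ with $d,e\geq0$, $m_1\geq\dots\geq m_M\geq0$, satisfying $\sum m_i=2(d+e)-1$, $\sum m_i^2=2de+1$, and such that $(d+e-m_1;d-m_1,e-m_1,m_2,\dots,m_M)$ reduces to $(0;-1,0,\dots,0)$ by repeated Cremona moves. $\mu(d,e;m)(a):=\langle m,w(a)\rangle/(d+e)$, with $\langle\cdot,\cdot\rangle$ the Euclidean scalar product after padding with zeros. *)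

From mathcomp Require Import all_boot all_algebra.
From mathcomp Require Import Rstruct.
From Stdlib Require Import Reals.
Set Implicit Arguments. Unset Strict Implicit. Unset Printing Implicit Defensive.
Import GRing.Theory Num.Theory.
Fixpoint cf_aux (fuel p q : nat) : seq nat :=
  match fuel with
  | 0 => [::]
  | fuel'.+1 => if q == 0%N then [::] else p %/ q :: cf_aux fuel' q (p %% q)
  end.

Local Open Scope ring_scope.

(* Continued fraction expansion of a rational a = p/q >= 1 in lowest terms
   (numq a, denq a are coprime, denq a > 0).  The fuel p+q+1 suffices. *)
Definition cfrac (a : rat) : seq nat :=
  let p := absz (numq a) in let q := absz (denq a) in cf_aux (p + q).+1 p q.

(* Weights: block x_i repeated l_i times, with x_{i+1} = x_{i-1} - l_i x_i,
   started with x_{-1} = a, x_0 = 1 (so x_1 = a - l_0). *)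
Fixpoint wexp_aux (xprev xcur : rat) (ls : seq nat) : seq rat :=
  match ls with
  | [::] => [::]
  | l :: ls' => nseq l xcur ++ wexp_aux xcur (xprev - l%:R * xcur) ls'
  end.

Definition weight_expansion (a : rat) : seq rat := wexp_aux a 1 (cfrac a).

(* Euclidean scalar product after padding with zeros (zip truncates, which is
   the same as padding with zeros). *)
Definition dotp (m : seq int) (w : seq rat) : rat :=
  \sum_(p <- zip m w) (p.1)%:~R * p.2.

Definition mu (d e : int) (m : seq int) (a : rat) : rat :=
  dotp m (weight_expansion a) / (d + e)%:~R.

Definition cremona_transform (x : int * seq int) : int * seq int :=
  let: (dl, n) := x in
  let n1 := nth 0 n 0 in let n2 := nth 0 n 1 in let n3 := nth 0 n 2 in
  (2 * dl - n1 - n2 - n3,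
   [:: dl - n2 - n3, dl - n1 - n3, dl - n1 - n2 & drop 3 n]).

Definition cremona_move (x y : int * seq int) : Prop :=
  exists n : seq int,
    [/\ perm_eq n x.2, sorted (fun u v : int => v <= u) n, (3 <= size n)%nat,
        y.1 = (cremona_transform (x.1, n)).1 &
        perm_eq y.2 (cremona_transform (x.1, n)).2].

Inductive cremona_reaches : int * seq int -> int * seq int -> Prop :=
  | cr_refl x : cremona_reaches x x
  | cr_step x y z : cremona_move x y -> cremona_reaches y z -> cremona_reaches x z.

Definition reduces_to_E0 (x : int * seq int) : Prop :=
  exists (k : nat) (y : int * seq int),
    [/\ cremona_reaches (x.1, x.2 ++ nseq k 0) y,
        y.1 = 0 &
        perm_eq y.2 ((-1) :: nseq (size y.2).-1 0)].

Definition in_E (d e : int) (m : seq int) : Prop :=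
  (d = 0 /\ e = 0 /\ m = [:: -1]) \/
  [/\ [/\ 0 <= d, 0 <= e, (0 < size m)%nat,
         sorted (fun u v : int => v <= u) m & all (fun u : int => 0 <= u) m],
      \sum_(i <- m) i = 2 * (d + e) - 1,
      \sum_(i <- m) i ^+ 2 = 2 * d * e + 1 &
      reduces_to_E0 (d + e - head 0 m,
                     [:: d - head 0 m, e - head 0 m & behead m])].

Definition obstructive (d e : int) (m : seq int) : Prop :=
  exists a : rat, 1 <= a /\ Num.sqrt (ratr a / 2 : R) < ratr (mu d e m a).

(** Cauchy-Schwarz and [|w(a)|^2 <= a] give [mu(a)^2 (d+e)^2 <= |m|^2 a = (2de+1) a],
    while obstructiveness gives [mu(a)^2 > a/2].  Hence [(d+e)^2 < 2(2de+1)], i.e.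
    [(d-e)^2 < 2], which forces [d - e] to be [0] or [1]. *)

From mathcomp Require Import all_boot all_algebra.
From mathcomp Require Import Rstruct.
From Stdlib Require Import Reals.
From mathcomp Require Import order ring lra zify.
Import Order.TTheory GRing.Theory Num.Theory.
Local Open Scope ring_scope.

Lemma dotp_le_quadratic (m : seq int) (w : seq rat) (t : rat) :
  2 * t * dotp m w
    <= t ^+ 2 * \sum_(i <- m) (i%:~R : rat) ^+ 2 + \sum_(x <- w) x ^+ 2.
Proof.
have sqr_sum_ge0 (s : seq rat) : 0 <= \sum_(x <- s) x ^+ 2.
  by apply: sumr_ge0 => x _; apply: sqr_ge0.
elim: m w => [|i m IHm] [|x w]; rewrite /dotp /= ?big_nil ?big_cons.
- by rewrite !mulr0 addr0.
- by have := sqr_sum_ge0 w; have := sqr_ge0 x; nra.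
- have := sqr_sum_ge0 [seq (j%:~R : rat) | j <- m]; rewrite big_map.
  by have := sqr_ge0 (i%:~R : rat); have := sqr_ge0 t; nra.
- have := IHm w; rewrite /dotp /=.
  by have := sqr_ge0 (t * i%:~R - x); nra.
Qed.

Lemma dotp_sqr_le (m : seq int) (w : seq rat) :
  dotp m w ^+ 2 <= (\sum_(i <- m) (i%:~R : rat) ^+ 2) * \sum_(x <- w) x ^+ 2.
Proof.
set S := dotp m w; set M := \sum_(i <- m) _; set W := \sum_(x <- w) _.
have quad t : 2 * t * S <= t ^+ 2 * M + W := dotp_le_quadratic m w t.
have [M0 | M_neq0] := eqVneq M 0.
  (* With [M = 0] the bound [2 t S <= W] for all [t] forces [S = 0]. *)
  have [-> | S_neq0] := eqVneq S 0; first by rewrite M0 mul0r expr0n.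
  have := quad ((W + 1) / (2 * S)).
  have -> : 2 * ((W + 1) / (2 * S)) * S = W + 1 by field; rewrite S_neq0.
  by rewrite M0 mulr0 add0r; lra.
have M_gt0 : 0 < M by rewrite lt_def M_neq0 sumr_ge0 // => i _; apply: sqr_ge0.
have := quad (S / M).
have -> : 2 * (S / M) * S = 2 * (S ^+ 2 / M) by field.
have -> : (S / M) ^+ 2 * M = S ^+ 2 / M by field.
move=> quad_opt; have : S ^+ 2 / M <= W by lra.
by rewrite ler_pdivrMr // mulrC.
Qed.

(* Each Euclid step [p = l q + r] contributes [l] weights [q c] and leaves the
   pair [(q, r)], matching [p q = l q^2 + q r]; running out of fuel only drops terms. *)
Lemma sum_sqr_wexp_cf_le (fuel p q : nat) (c : rat) : 0 <= c ->
  \sum_(x <- wexp_aux (p%:R * c) (q%:R * c) (cf_aux fuel p q)) x ^+ 2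
    <= p%:R * c * (q%:R * c).
Proof.
move=> c_ge0; elim: fuel p q => [|fuel IH] p q /=.
  by rewrite big_nil !mulr_ge0.
case: eqP => [_ | _]; first by rewrite big_nil !mulr_ge0.
rewrite big_cat /= big_nseq iter_addr_0 -[_ *+ (divn p q)]mulr_natr.
have p_eq : (p%:R : rat) = (divn p q)%:R * q%:R + (modn p q)%:R.
  by rewrite {1}(divn_eq p q) natrD natrM.
have -> : p%:R * c - (divn p q)%:R * (q%:R * c) = (modn p q)%:R * c.
  by rewrite p_eq; ring.
have := IH q (modn p q); rewrite p_eq.
by move: (q%:R : rat) ((divn p q)%:R : rat) ((modn p q)%:R : rat) => Q L P; nra.
Qed.

Lemma sum_sqr_weight_expansion_le (a : rat) : 0 <= a ->
  \sum_(x <- weight_expansion a) x ^+ 2 <= a.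
Proof.
move=> a_ge0; rewrite /weight_expansion /cfrac.
set p := absz (numq a); set q := absz (denq a).
have q_eq : (q%:R : rat) = (denq a)%:~R by rewrite natr_absz gtr0_norm.
have p_eq : (p%:R : rat) = (numq a)%:~R by rewrite natr_absz ger0_norm ?numq_ge0.
have q_neq0 : (q%:R : rat) != 0 by rewrite q_eq intr_eq0 denq_neq0.
have a_eq : a = p%:R * (q%:R)^-1 by rewrite p_eq q_eq divq_num_den.
have one_eq : (1 : rat) = q%:R * (q%:R)^-1 by rewrite divff.
have := @sum_sqr_wexp_cf_le (p + q).+1 p q (q%:R)^-1.
by rewrite -a_eq -one_eq mulr1 invr_ge0; apply.
Qed.

Lemma dotp_weight_expansion_sqr_le (m : seq int) {a : rat} : 0 <= a ->
  dotp m (weight_expansion a) ^+ 2 <= (\sum_(i <- m) (i%:~R : rat) ^+ 2) * a.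
Proof.
move=> a_ge0; apply: le_trans (dotp_sqr_le _ _) _.
apply: ler_wpM2l; first by apply: sumr_ge0 => i _; apply: sqr_ge0.
exact: sum_sqr_weight_expansion_le.
Qed.

Lemma sqrtr_lt_sqr {R : rcfType} {x y : R} :
  0 <= x -> Num.sqrt x < y -> 0 < y /\ x < y ^+ 2.
Proof.
move=> x_ge0 lt_sqrt; have y_gt0 := le_lt_trans (sqrtr_ge0 x) lt_sqrt.
split=> //; move: lt_sqrt.
by rewrite -[y in _ < y]ger0_norm ?ltW // -sqrtr_sqr ltr_sqrt ?exprn_gt0.
Qed.

Lemma obstructive_sqr_lt {d e : int} {m : seq int} :
  \sum_(i <- m) i ^+ 2 = 2 * d * e + 1 -> obstructive d e m ->
  (d + e) ^+ 2 < 2 * (2 * d * e + 1).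
Proof.
move=> sum_sqr [a [a_ge1 lt_mu]].
have a_gt0 : 0 < a by apply: lt_le_trans a_ge1.
have [mu_gt0 lt_mu2] : 0 < mu d e m a /\ a / 2 < mu d e m a ^+ 2.
  have half_ge0 : 0 <= ratr a / 2 :> R by rewrite divr_ge0 ?ler0q ?ltW.
  have [] := sqrtr_lt_sqr half_ge0 lt_mu.
  have -> : ratr a / 2 = ratr (a / 2) :> R by rewrite fmorph_div rmorph_nat.
  by rewrite ltr0q -rmorphXn ltr_rat.
set D : rat := (d + e)%:~R; set M : rat := (2 * d * e + 1)%:~R.
have M_eq : \sum_(i <- m) (i%:~R : rat) ^+ 2 = M.
  by rewrite /M -sum_sqr rmorph_sum; apply: eq_bigr => i _; rewrite rmorphXn.
have D_neq0 : D != 0 by apply: contraTneq mu_gt0 => D0; rewrite /mu -/D D0 invr0 mulr0.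
have dotp_eq : dotp m (weight_expansion a) = mu d e m a * D by rewrite mulfVK.
have := dotp_weight_expansion_sqr_le m (ltW a_gt0).
rewrite M_eq dotp_eq exprMn => le_M.
have lt_D : D ^+ 2 < 2 * M.
  have D2_gt0 : 0 < D ^+ 2 by rewrite exprn_even_gt0 //= D_neq0.
  have : a / 2 * D ^+ 2 < M * a by apply: lt_le_trans le_M; rewrite ltr_pM2r.
  by nra.
by move: lt_D; rewrite /D /M -rmorphXn -[2 * _]/(2%:~R * _) -rmorphM ltr_int.
Qed.

Theorem lemma4p5 (d e : int) (m : seq int) :
  in_E d e m -> e <= d -> obstructive d e m -> e = d \/ e = d - 1.
Proof.
case=> [[-> [-> _]] _ _ | [_ _ sum_sqr _] le_ed obstr]; first by left.
have := obstructive_sqr_lt sum_sqr obstr.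
by rewrite expr2; nia.
Qed.
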